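(* For $i=1,2$ let $\mathbf{L}_i=(L_i,\le)$ be a finite lattice with more than two elements and let $(R_i,\vee,\circ)$ be a subsemiring of $(\mathrm{Res}_1(\mathbf{L}_i),\vee,\circ)$ such that $f_{a,0}\in R_i$ for all $a\in L_i\setminus\{1\}$, every $f\in R_i$ satisfies $f_{a,0}\le f$ for some $a\in L_i\setminus\{1\}$, and for all $a\in L_i\setminus\{0,1\}$, $b\in L_i$ there exists $f\in R_i$ with $f(a)=b$. If $(R_1,\vee,\circ)$ and $(R_2,\vee,\circ)$ are isomorphic semirings, then $\mathbf{L}_1$ and $\mathbf{L}_2$ are isomorphic.
   Context: For a finite lattice $\mathbf{L}$ with least element $0$ and greatest element $1$, $\mathrm{Res}_1(\mathbf{L})$ is the set of maps $f:L\to L$ preserving binary joins with $f(0)=0$ and $f(1)=1$, a semiring under pointwise join $\vee$ and composition $\circ$, ordered pointwise. $f_{a,b}(x)=b$ if $x\le a$ and $1$ otherwise. *)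

From mathcomp Require Import all_boot all_order.
Set Implicit Arguments. Unset Strict Implicit. Unset Printing Implicit Defensive.
Import Order.TTheory.
Local Open Scope order_scope.

(* A finite lattice with 0 and 1 is modelled as a finTBLatticeType
   (\bot = 0, \top = 1). Maps L -> L are plain functions. *)

Section Res.
Context {d : Order.disp_t} {L : finTBLatticeType d}.

Definition res1 (f : L -> L) : Prop :=
  (forall x y : L, f (x `|` y) = f x `|` f y) /\ f \bot = \bot /\ f \top = \top.

Definition fjoin (f g : L -> L) : L -> L := fun x => f x `|` g x.

Definition fle (f g : L -> L) : Prop := forall x : L, f x <= g x.

Definition fab (a b : L) : L -> L := fun x => if x <= a then b else \top.

Definition subsemiring (R : (L -> L) -> Prop) : Prop :=
  (forall f, R f -> res1 f) /\
  (forall f g, R f -> R g -> R (fjoin f g)) /\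
  (forall f g, R f -> R g -> R (f \o g)).

Definition prop64_hyp (R : (L -> L) -> Prop) : Prop :=
  subsemiring R /\
  (forall a : L, a != \top -> R (fab a \bot)) /\
  (forall f, R f -> exists a : L, a != \top /\ fle (fab a \bot) f) /\
  (forall a b : L, a != \bot -> a != \top -> exists f, R f /\ f a = b).
End Res.

Definition semiring_iso {d1 d2 : Order.disp_t}
  {L1 : finTBLatticeType d1} {L2 : finTBLatticeType d2}
  (R1 : (L1 -> L1) -> Prop) (R2 : (L2 -> L2) -> Prop)
  (phi : (L1 -> L1) -> (L2 -> L2)) : Prop :=
  (forall f, R1 f -> R2 (phi f)) /\
  (forall f g, R1 f -> R1 g -> phi f = phi g -> f = g) /\
  (forall h, R2 h -> exists2 f, R1 f & phi f = h) /\
  (forall f g, R1 f -> R1 g -> phi (fjoin f g) = fjoin (phi f) (phi g)) /\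
  (forall f g, R1 f -> R1 g -> phi (f \o g) = phi f \o phi g).

Definition lattice_iso {d1 d2 : Order.disp_t}
  {L1 : finTBLatticeType d1} {L2 : finTBLatticeType d2} (h : L1 -> L2) : Prop :=
  bijective h /\
  (forall x y, h (x `|` y) = h x `|` h y) /\
  (forall x y, h (x `&` y) = h x `&` h y).

From mathcomp Require Import all_boot all_order.
From Stdlib Require Import FunctionalExtensionality.
Set Implicit Arguments. Unset Strict Implicit. Unset Printing Implicit Defensive.
Import Order.TTheory.
Local Open Scope order_scope.

(* The maps [f_{a,0}] with [a != 1] are exactly the right zeros of [(R, o)],
   i.e. the [g] with [f o g = g] for all [f] in [R]: they are right zeros since
   every [f] in [Res_1] fixes [0] and [1]; conversely a right zero takes only the
   values [0] and [1] (any other value [b = g x] is moved by some [f] in [R]),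
   hence is [f_{c,0}] for [c] the largest element sent to [0].  A semiring
   isomorphism preserves right zeros and the join order on them, and
   [f_{a',0} \/ f_{a,0} = f_{a,0}] iff [a <= a'].  So [a |-> b] with
   [phi f_{a,0} = f_{b,0}], extended by [1 |-> 1], is an order isomorphism
   [L1 -> L2], hence a lattice isomorphism. *)

Definition right_zero (T : Type) (R : (T -> T) -> Prop) (g : T -> T) : Prop :=
  forall f, R f -> f \o g = g.

Section FiniteLattice.
Context {d : Order.disp_t} {L : finTBLatticeType d}.
Implicit Types (a b c x y : L) (f g : L -> L) (R : (L -> L) -> Prop).

Lemma top_neq_bot_card : (1 < #|L|)%N -> (\top : L) != \bot.
Proof.
apply: contraTneq => top_bot; rewrite -leqNgt.
apply/card_le1_eqP => x y _ _.
have bot_unique z : z = \bot :> L by apply/le_anti; rewrite le0x -top_bot lex1.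
by rewrite (bot_unique x) (bot_unique y).
Qed.

Lemma res1_mono f x y : res1 f -> x <= y -> f x <= f y.
Proof. by move=> [f_join _] /join_idPr <-; rewrite f_join leUl. Qed.

Lemma fjoin_fab_bot a a' : (\top : L) != \bot ->
  fjoin (fab a' \bot) (fab a \bot) = fab a \bot <-> a <= a'.
Proof.
move=> top_neq_bot; split => [/(congr1 (fun f => f a))|le_aa'].
  rewrite /fjoin /fab lexx joinx0; case: ifP => // _ top_bot.
  by rewrite top_bot eqxx in top_neq_bot.
apply: functional_extensionality => x; rewrite /fjoin /fab.
case: (boolP (x <= a)) => [le_xa|_]; last by rewrite joinx1.
by rewrite (le_trans le_xa le_aa') joinx0.
Qed.

Lemma fab_bot_inj a a' : (\top : L) != \bot -> fab a \bot = fab a' \bot -> a = a'.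
Proof.
move=> top_neq_bot eq_fab; have fjoinxx g : fjoin g g = g.
  by apply: functional_extensionality => x; rewrite /fjoin joinxx.
by apply/le_anti/andP; split; apply/(fjoin_fab_bot _ _ top_neq_bot); rewrite eq_fab fjoinxx.
Qed.

Lemma res1_comp_fab_bot f a : res1 f -> f \o fab a \bot = fab a \bot.
Proof.
move=> [_ [f_bot f_top]]; apply: functional_extensionality => x.
by rewrite /= /fab; case: ifP.
Qed.

Lemma res1_bot_top_valued g : (\top : L) != \bot -> res1 g ->
  (forall x, g x = \bot \/ g x = \top) -> exists2 c, c != \top & g = fab c \bot.
Proof.
move=> top_neq_bot g_res1 g_bot_top; have [g_join [g_bot g_top]] := g_res1.
pose c := \join_(x | g x == \bot) x.
have gc : g c = \bot by rewrite (big_morph g g_join g_bot) big1 // => x /eqP.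
have g_botP x : g x = \bot <-> x <= c.
  split=> [/eqP gx | le_xc]; first exact: (@joins_sup _ _ _ x (fun i => g i == \bot) id gx).
  by apply/eqP; rewrite -lex0 -gc res1_mono.
exists c.
  apply: contra_neq top_neq_bot => c_top.
  by rewrite -g_top; apply/g_botP; rewrite c_top.
apply: functional_extensionality => x; rewrite /fab.
case: ifP => [/g_botP // | /negbT le_xc]; case: (g_bot_top x) => // /g_botP.
by move: le_xc => /negP.
Qed.

Lemma fab_bot_right_zero R a : subsemiring R -> right_zero R (fab a \bot).
Proof. by move=> [R_res1 _] f Rf; apply/res1_comp_fab_bot/R_res1. Qed.

Lemma right_zero_fab_bot R g : (\top : L) != \bot -> prop64_hyp R ->
  R g -> right_zero R g -> exists2 c, c != \top & g = fab c \bot.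
Proof.
move=> top_neq_bot [[R_res1 _] [_ [_ R_attains]]] Rg g_right_zero.
apply: res1_bot_top_valued => [//||x]; first exact: R_res1.
case: (eqVneq (g x) \bot) => [|gx_bot]; [by left|].
case: (eqVneq (g x) \top) => [|gx_top]; [by right|].
have [f [Rf f_gx]] := R_attains (g x) \bot gx_bot gx_top.
have := congr1 (fun h => h x) (g_right_zero f Rf); rewrite /= f_gx => gx_eq.
by rewrite -gx_eq eqxx in gx_bot.
Qed.

End FiniteLattice.

Lemma semiring_iso_right_zero d1 d2 (L1 : finTBLatticeType d1) (L2 : finTBLatticeType d2)
    (R1 : (L1 -> L1) -> Prop) (R2 : (L2 -> L2) -> Prop) phi g :
  subsemiring R1 -> semiring_iso R1 R2 phi -> R1 g ->
  right_zero R1 g <-> right_zero R2 (phi g).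
Proof.
move=> [_ [_ R1_comp]] [phi_R2 [phi_inj [phi_onto [_ phi_comp]]]] R1g; split.
  by move=> g_rz _ /phi_onto [f R1f <-]; rewrite -phi_comp // g_rz.
move=> phig_rz f R1f; apply: phi_inj => //; first exact: R1_comp.
by rewrite phi_comp // phig_rz //; exact: phi_R2.
Qed.

Lemma mono_onto_lattice_iso d1 d2 (L1 : finTBLatticeType d1) (L2 : finTBLatticeType d2)
    (h : L1 -> L2) :
  {mono h : x y / x <= y} -> (forall b, exists a, h a = b) -> lattice_iso h.
Proof.
move=> h_mono h_onto; have h_inj : injective h.
  by move=> x y hxy; apply/le_anti; rewrite -!h_mono hxy lexx.
have h_onto_eq b : exists a, h a == b by have [a <-] := h_onto b; exists a.
have h_inv_cancel : cancel (fun b => xchoose (h_onto_eq b)) h.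
  by move=> b; apply/eqP/(xchooseP (h_onto_eq b)).
split; first by exists (fun b => xchoose (h_onto_eq b)) => // x; apply: h_inj.
split=> x y.
  have [z hz] := h_onto (h x `|` h y).
  have [le_xz le_yz] : x <= z /\ y <= z by rewrite -!h_mono hz leUl leUr.
  by apply/le_anti; rewrite -hz !h_mono leUx le_xz le_yz -h_mono hz leUx !h_mono leUl leUr.
have [z hz] := h_onto (h x `&` h y).
have [le_zx le_zy] : z <= x /\ z <= y by rewrite -!h_mono hz leIl leIr.
by apply/le_anti; rewrite -hz !h_mono lexI le_zx le_zy -h_mono hz lexI !h_mono leIl leIr.
Qed.

Section Transfer.
Variables (d1 d2 : Order.disp_t) (L1 : finTBLatticeType d1) (L2 : finTBLatticeType d2).
Variables (R1 : (L1 -> L1) -> Prop) (R2 : (L2 -> L2) -> Prop) (phi : (L1 -> L1) -> L2 -> L2).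
Hypotheses (hR1 : prop64_hyp R1) (hR2 : prop64_hyp R2) (phi_iso : semiring_iso R1 R2 phi).
Hypotheses (ntriv1 : (\top : L1) != \bot) (ntriv2 : (\top : L2) != \bot).

Let R1_fab a : a != \top -> R1 (fab a \bot). Proof. exact: hR1.2.1. Qed.
Let R2_fab b : b != \top -> R2 (fab b \bot). Proof. exact: hR2.2.1. Qed.

Lemma phi_fab_bot a : a != \top ->
  exists2 b, b != \top & phi (fab a \bot) = fab b \bot.
Proof.
move=> a_top; have R1a := R1_fab a_top.
apply: right_zero_fab_bot ntriv2 hR2 (phi_iso.1 _ R1a) _.
by apply/(semiring_iso_right_zero hR1.1 phi_iso R1a)/fab_bot_right_zero; case: hR1.
Qed.

Lemma phi_onto_fab_bot b : b != \top ->
  exists2 a, a != \top & phi (fab a \bot) = fab b \bot.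
Proof.
move=> b_top; have [g R1g phi_g] := phi_iso.2.2.1 _ (R2_fab b_top).
have g_rz : right_zero R1 g.
  apply/(semiring_iso_right_zero hR1.1 phi_iso R1g); rewrite phi_g.
  by apply: fab_bot_right_zero; case: hR2.
have [a a_top g_fab] := right_zero_fab_bot ntriv1 hR1 R1g g_rz.
by exists a; rewrite // -g_fab.
Qed.

Definition fab_transfer (a : L1) : L2 :=
  if a == \top then \top
  else odflt \top [pick b | (b != \top) && [forall x, phi (fab a \bot) x == fab b \bot x]].

Lemma fab_transferE a : a != \top ->
  fab_transfer a != \top /\ phi (fab a \bot) = fab (fab_transfer a) \bot.
Proof.
move=> a_top; rewrite /fab_transfer (negbTE a_top).
case: pickP => [b /andP [b_top /forallP phi_a] | none].
  by split=> //; apply: functional_extensionality => x; apply/eqP.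
have [b b_top phi_a] := phi_fab_bot a_top.
by have := none b; rewrite b_top phi_a /= => /negbT/forallPn [x]; rewrite eqxx.
Qed.

Lemma fab_transfer_top : fab_transfer \top = \top.
Proof. by rewrite /fab_transfer eqxx. Qed.

Lemma fab_transfer_mono : {mono fab_transfer : x y / x <= y}.
Proof.
move=> x y; have [->|y_top] := eqVneq y \top; first by rewrite fab_transfer_top !lex1.
have [hy_top phi_y] := fab_transferE y_top.
have [->|x_top] := eqVneq x \top.
  by rewrite fab_transfer_top !le1x (negbTE y_top) (negbTE hy_top).
have [_ phi_x] := fab_transferE x_top.
have [_ [phi_inj [_ [phi_join _]]]] := phi_iso.
have [_ [R1_join _]] := hR1.1.
apply/idP/idP => [le_hxy | le_xy].
  apply/(fjoin_fab_bot _ _ ntriv1)/phi_inj; [exact: R1_join (R1_fab _) (R1_fab _)|exact: R1_fab|].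
  by rewrite phi_join ?phi_x ?phi_y; [apply/fjoin_fab_bot|exact: R1_fab..].
apply/(fjoin_fab_bot _ _ ntriv2); rewrite -phi_x -phi_y -phi_join; try exact: R1_fab.
by congr phi; apply/fjoin_fab_bot.
Qed.

Lemma fab_transfer_onto b : exists a, fab_transfer a = b.
Proof.
have [->|b_top] := eqVneq b \top; first by exists \top; rewrite fab_transfer_top.
have [a a_top phi_a] := phi_onto_fab_bot b_top; exists a.
by apply: (fab_bot_inj ntriv2); rewrite -phi_a; case: (fab_transferE a_top).
Qed.

End Transfer.

Theorem proposition6p4 (d1 d2 : Order.disp_t)
  (L1 : finTBLatticeType d1) (L2 : finTBLatticeType d2)
  (R1 : (L1 -> L1) -> Prop) (R2 : (L2 -> L2) -> Prop) :
  2 < #|L1| -> 2 < #|L2| ->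
  prop64_hyp R1 -> prop64_hyp R2 ->
  (exists phi, semiring_iso R1 R2 phi) ->
  exists h : L1 -> L2, lattice_iso h.
Proof.
move=> card1 card2 hR1 hR2 [phi phi_iso].
have ntriv1 := top_neq_bot_card (ltnW card1).
have ntriv2 := top_neq_bot_card (ltnW card2).
exists (fab_transfer phi); apply: mono_onto_lattice_iso.
- exact: (fab_transfer_mono hR1 hR2 phi_iso ntriv1 ntriv2).
- exact: (fab_transfer_onto hR1 hR2 phi_iso ntriv1 ntriv2).
Qed.
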